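(* For every $U\in\mathcal U_n$, the part listing $\tilde p(U)$ is the minimal part listing for $U$ with respect to graded reverse lexicographic order.
   Context: A unit interval order on $\{1,\dots,n\}$ is given by closed intervals $I_1,\dots,I_n$ of length $1$, numbered from left to right, with $i\prec j$ iff $I_i$ lies strictly to the left of $I_j$; $\mathcal U_n$ is the set of these. For a sequence $w=(w_1,\dots,w_n)$ of nonnegative integers, $P(w)$ is the poset on $\{1,\dots,n\}$ with $i\prec j$ iff $w_j-w_i\ge2$, or $w_j-w_i=1$ and $i<j$; $w$ is a part listing for $U$ if $P(w)$ is isomorphic to $U$. Area sequences of Dyck paths of length $n$ are the sequences of nonnegative integers with $a_1=0$ and $a_i\le a_{i-1}+1$. For each $U$ there is a unique part listing for $U$ that is the area sequence of a Dyck path; it is denoted $\tilde p(U)$. Graded reverse lexicographic order: $(a_1,\dots,a_n)<(b_1,\dots,b_n)$ if $\sum a_i<\sum b_i$, or if the sums are equal and $a_j>b_j$ where $j$ is the first index where they differ. *)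

From Stdlib Require Import Reals.
From mathcomp Require Import all_boot all_fingroup.
Set Implicit Arguments. Unset Strict Implicit. Unset Printing Implicit Defensive.

(* Elements {1,...,n} are represented by 'I_n (i.e. 0,...,n-1);
   sequences (w_1,...,w_n) by w : seq nat of size n, w_i = nth 0 w (i-1). *)

(* U is a unit interval order on 'I_n: there are unit intervals
   [x_i, x_i + 1] numbered from left to right (x nondecreasing), and
   i < j in U iff I_i lies strictly to the left of I_j, i.e. x_i + 1 < x_j. *)
Definition is_unit_interval_order (n : nat) (U : rel 'I_n) : Prop :=
  exists x : 'I_n -> R,
    (forall i j : 'I_n, (i <= j)%N -> Rle (x i) (x j)) /\
    (forall i j : 'I_n, U i j <-> Rlt (Rplus (x i) 1) (x j)).

Definition Pw (n : nat) (w : seq nat) : rel 'I_n :=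
  fun i j => let wi := nth 0 w i in let wj := nth 0 w j in
    (wi + 2 <= wj) || ((wj == wi + 1) && (i < j)).

Definition rel_iso (n : nat) (U V : rel 'I_n) : Prop :=
  exists f : {perm 'I_n}, forall i j, U i j = V (f i) (f j).

Definition part_listing (n : nat) (U : rel 'I_n) (w : seq nat) : Prop :=
  size w = n /\ rel_iso U (@Pw n w).

Definition area_seq (n : nat) (a : seq nat) : Prop :=
  size a = n /\ (0 < n -> nth 0 a 0 = 0) /\
  (forall i, 0 < i < n -> nth 0 a i <= (nth 0 a i.-1).+1).

Fixpoint revlex_lt (a b : seq nat) : bool :=
  match a, b with
  | x :: a', y :: b' => (y < x) || ((x == y) && revlex_lt a' b')
  | _, _ => false
  end.

Definition grevlex_lt (a b : seq nat) : bool :=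
  (sumn a < sumn b) || ((sumn a == sumn b) && revlex_lt a b).
Definition grevlex_le (a b : seq nat) : bool := (a == b) || grevlex_lt a b.

From Stdlib Require Import Reals Lra.
From mathcomp Require Import all_boot all_fingroup zify.

(* A unit interval order only enters through its relation being
   irreflexive and monotone: if I_i < I_j then I_i' < I_j' for i' <= i and j <= j'.
   By induction on n, the last interval z is inserted into an area-sequence
   listing of the others: its value c is one more than the largest value below
   it, and its position is just after the last element that must precede it,
   namely those of value c, and those of value c - 1 lying below z.  This is
   correct thanks to the invariant that equal values are listed in the
   left-to-right order of their intervals.

   In P(w) for an area sequence w, every element of value k + 1 lies
   above an element of value k listed before it, so an isomorphism h from P(w) to
   P(v) can only raise values, and sumn w <= sumn v with equality only when h
   preserves values.  Then h also preserves, for an element of value b + 1, the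
   number of entries b listed before it.  If w_j < v_j = b + 1 at the first
   difference j, then w climbs through a b before its next entry b + 1, so fewer
   entries b + 1 of w than of v have at most #{i < j | v_i = b} entries b before
   them, although h matches these entries up. *)

Set Implicit Arguments. Unset Strict Implicit. Unset Printing Implicit Defensive.

Record natural_uio n (U : rel 'I_n) : Prop := NaturalUio {
  uio_irr : forall i, ~~ U i i;
  uio_mono : forall i j i' j' : 'I_n, i' <= i -> j <= j' -> U i j -> U i' j' }.

Lemma unit_interval_order_natural n (U : rel 'I_n) :
  is_unit_interval_order U -> natural_uio U.
Proof.
case=> x [x_mono U_x]; split=> [i | i j i' j' le_i le_j /U_x Uij].
  by apply/negP => /U_x; lra.
by apply/U_x; have := x_mono _ _ le_i; have := x_mono _ _ le_j; lra.
Qed.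

Lemma uio_lt n (U : rel 'I_n) i j : natural_uio U -> U i j -> i < j.
Proof.
move=> U_uio Uij; rewrite ltnNge; apply/negP => le_ji.
by have := uio_irr U_uio j; rewrite (uio_mono U_uio le_ji (leqnn j) Uij).
Qed.

Definition restrict_init n (U : rel 'I_n.+1) : rel 'I_n :=
  fun i j => U (lift ord_max i) (lift ord_max j).

Lemma natural_uio_restrict n (U : rel 'I_n.+1) :
  natural_uio U -> natural_uio (restrict_init U).
Proof.
move=> U_uio; split=> [i | i j i' j' le_i le_j]; first exact: (uio_irr U_uio).
by apply: (uio_mono U_uio); rewrite !lift_max.
Qed.

Lemma Pw_lt n u (s t : 'I_n) : Pw u s t -> nth 0 u s < nth 0 u t.
Proof. by rewrite /Pw => /orP[|/andP[/eqP -> _]]; lia. Qed.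

Lemma Pw_irr n u (s : 'I_n) : Pw u s s = false.
Proof. by apply/negP => /Pw_lt; rewrite ltnn. Qed.

Lemma Pw_succ n u (s t : 'I_n) : (nth 0 u s).+1 = nth 0 u t -> Pw u s t = (s < t).
Proof. by move=> e; rewrite /Pw -e addn1 eqxx addn2 ltnn. Qed.

Section AreaSeq.
Variables (n : nat) (w : seq nat).
Hypothesis w_area : area_seq n w.

Lemma area_seq_climb j t k : t < n -> j <= t -> nth 0 w j <= k <= nth 0 w t ->
  exists2 s, j <= s <= t & nth 0 w s = k.
Proof.
case: w_area => _ [_ w_step].
elim: t => [|t IH] lt_tn le_jt /andP[le_jk le_kt].
  by move: le_jt le_jk; rewrite leqn0 => /eqP -> le_jk; exists 0 => //; lia.
case: (leqP j t) => [le_jt' | lt_tj]; last first.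
  have ej : j = t.+1 by lia.
  by subst j; exists t.+1 => //; lia.
case: (leqP k (nth 0 w t)) => [le_kt' | lt_tk].
  have [s /andP[le_js le_st] <-] := IH (ltnW lt_tn) le_jt' ltac:(lia).
  by exists s; rewrite ?le_js ?(leqW le_st).
by exists t.+1; [lia | have /= := w_step t.+1 lt_tn; lia].
Qed.

Lemma area_seq_Pw_prev (t : 'I_n) : 0 < nth 0 w t ->
  exists2 s : 'I_n, Pw w s t & (nth 0 w s).+1 = nth 0 w t.
Proof.
move=> w_pos; have w0 : nth 0 w 0 = 0.
  by case: w_area => _ [w0 _]; apply/w0/(leq_ltn_trans (leq0n t) (ltn_ord t)).
have [s /andP[_ le_st] ws] := @area_seq_climb 0 t (nth 0 w t).-1 (ltn_ord t) (leq0n t)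
  ltac:(rewrite w0; lia).
have lt_sn : s < n by have := ltn_ord t; lia.
have lt_st : s < t.
  by rewrite ltn_neqAle le_st andbT; apply/eqP => est; move: ws; rewrite est; lia.
have ws' : (nth 0 w s).+1 = nth 0 w t by lia.
by exists (Ordinal lt_sn); rewrite // Pw_succ.
Qed.

End AreaSeq.

Definition insert_nth T (s : seq T) i x := take i s ++ x :: drop i s.

Section InsertNth.
Variables (T : Type) (x0 : T) (s : seq T) (i : nat) (x : T).
Hypothesis le_i_size : i <= size s.

Lemma size_insert_nth : size (insert_nth s i x) = (size s).+1.
Proof. by rewrite size_cat /= size_take size_drop; case: ltnP; lia. Qed.

Lemma nth_insert_nth k : nth x0 (insert_nth s i x) k =
  if k < i then nth x0 s k else if k == i then x else nth x0 s k.-1.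
Proof.
rewrite nth_cat size_takel //; case: ltnP => [lt_ki | le_ik]; first by rewrite nth_take.
case: eqP => [-> | /eqP ne_ki]; first by rewrite subnn.
have -> : k - i = (k.-1 - i).+1 by lia.
by rewrite /= nth_drop; congr nth; lia.
Qed.

Lemma nth_insert_nth_at : nth x0 (insert_nth s i x) i = x.
Proof. by rewrite nth_insert_nth ltnn eqxx. Qed.

Lemma nth_insert_nth_bump k : nth x0 (insert_nth s i x) (bump i k) = nth x0 s k.
Proof.
rewrite nth_insert_nth /bump; case: (leqP i k) => [le_ik | lt_ki] /=; last by rewrite lt_ki.
by rewrite add1n ltnNge ltnW ?ltnS //= gtn_eqF ?ltnS.
Qed.

End InsertNth.

Lemma ltn_bump h i j : (bump h i < bump h j) = (i < j).
Proof. by rewrite !ltnNge leq_bump2. Qed.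

Lemma bump_ltn h i : (bump h i < h) = (i < h).
Proof. by rewrite /bump; case: (leqP h i) => [le_hi | ->] //=; rewrite !ltnNge leqW. Qed.

Lemma area_seq_insert n w q c : area_seq n w -> q <= n ->
    (q = 0 -> c = 0) -> (0 < q -> c <= (nth 0 w q.-1).+1) ->
    (q < n -> nth 0 w q <= c.+1) ->
  area_seq n.+1 (insert_nth w q c).
Proof.
case=> size_w [w0 w_step] le_qn c0 c_le_prev next_le_c.
have le_q_size : q <= size w by rewrite size_w.
split; first by rewrite size_insert_nth ?size_w.
split=> [_ | k /andP[k_pos lt_kn]]; rewrite !nth_insert_nth //.
  by case: (posnP q) => [q0 | q_pos] /=; [rewrite q0 /= c0 | rewrite w0 //; lia].
case: (ltngtP k q) => [lt_kq | lt_qk | eq_kq]; last subst k.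
- have -> : k.-1 < q by lia.
  by apply: w_step; lia.
- have -> : (k.-1 < q) = false by apply/negbTE; lia.
  case: (eqVneq k.-1 q) => [-> | ne_kq] /=; first by apply: next_le_c; lia.
  by apply: w_step; lia.
- have -> : q.-1 < q by lia.
  exact: c_le_prev.
Qed.

Section PwInsert.
Variables (n : nat) (w : seq nat) (q : 'I_n.+1) (c : nat).
Hypothesis size_w : size w = n.

Let le_q_size : q <= size w. Proof. by rewrite size_w -ltnS. Qed.

Lemma Pw_insert_lift (x y : 'I_n) :
  Pw (insert_nth w q c) (lift q x) (lift q y) = Pw w x y.
Proof. by rewrite /Pw /= !nth_insert_nth_bump // ltn_bump. Qed.

Lemma Pw_insert_lift_at (x : 'I_n) : Pw (insert_nth w q c) (lift q x) q =
  (nth 0 w x + 2 <= c) || (c == nth 0 w x + 1) && (x < q).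
Proof.
by rewrite /Pw /= nth_insert_nth_bump // nth_insert_nth_at // bump_ltn.
Qed.

Lemma Pw_insert_at_lift (x : 'I_n) :
  nth 0 w x <= c -> Pw (insert_nth w q c) q (lift q x) = false.
Proof.
move=> le_xc; apply/negbTE/negP => /Pw_lt /=.
by rewrite nth_insert_nth_at // nth_insert_nth_bump //; lia.
Qed.

End PwInsert.

Lemma bigmax_pos_witness (I : finType) (P : pred I) (F : I -> nat) :
  0 < \max_(i | P i) F i -> exists2 i, P i & \max_(i | P i) F i = F i.
Proof.
case: (pickP P) => [i0 Pi0 _ | P0]; last by rewrite big_pred0.
have P_pos : 0 < #|P| by apply/card_gt0P; exists i0.
by have [i Pi ->] := eq_bigmax_cond F P_pos; exists i.
Qed.

Definition area_listing n (U : rel 'I_n) (w : seq nat) (f : {perm 'I_n}) : Prop :=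
  [/\ area_seq n w, forall i j, U i j = Pw w (f i) (f j) &
      forall i j : 'I_n, i < j -> nth 0 w (f i) = nth 0 w (f j) -> f i < f j].

Section ExtendListing.
Variables (n : nat) (U : rel 'I_n.+1) (w : seq nat) (f : {perm 'I_n}).
Local Notation U' := (restrict_init U).
Local Notation below_last i := (U (lift ord_max i) ord_max).
Local Notation level i := (nth 0 w (f i)).

Hypothesis U_uio : natural_uio U.
Hypothesis w_area : area_seq n w.
Hypothesis U'_Pw : forall i j, U' i j = Pw w (f i) (f j).
Hypothesis f_level : forall i j : 'I_n, i < j -> level i = level j -> f i < f j.

Let new_level := \max_(i | below_last i) (level i).+1.
Let precedes_new i := below_last i && (level i == new_level.-1) || (level i == new_level).
Let new_pos := \max_(i | precedes_new i) (f i).+1.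

Lemma level_prev (i : 'I_n) : 0 < level i -> exists2 y, U' y i & (level y).+1 = level i.
Proof.
move=> pos; have [s Psi Es] := area_seq_Pw_prev w_area pos.
by exists (f^-1 s)%g; rewrite ?U'_Pw permKV.
Qed.

Lemma below_last_of_rel (i j : 'I_n) : U' i j -> below_last i.
Proof. by apply: (uio_mono U_uio (leqnn _)); rewrite leq_ord. Qed.

Lemma below_last_down (i j : 'I_n) : i <= j -> below_last j -> below_last i.
Proof. by move=> le_ij; apply: (uio_mono U_uio _ (leqnn _)); rewrite !lift_max. Qed.

Lemma rel_of_not_below_last (i j k : 'I_n) :
  U' i j -> below_last j -> ~~ below_last k -> U' i k.
Proof.
move=> Uij Bj; case: (leqP k j) => [le_kj | lt_jk].
  by rewrite (below_last_down le_kj Bj).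
by move=> _; apply: (uio_mono U_uio (leqnn _) _ Uij); rewrite !lift_max ltnW.
Qed.

Lemma below_last_lt_new_level (i : 'I_n) : below_last i -> (level i).+1 <= new_level.
Proof. by move=> Bi; apply: (leq_bigmax_cond i). Qed.

Lemma new_level_witness :
  0 < new_level -> exists2 s, below_last s & (level s).+1 = new_level.
Proof. by rewrite /new_level => /bigmax_pos_witness [s Bs ->]; exists s. Qed.

Lemma precedes_new_lt (i : 'I_n) : precedes_new i -> f i < new_pos.
Proof. by move=> Pi; apply: (leq_bigmax_cond i). Qed.

Lemma new_pos_witness : 0 < new_pos -> exists2 t, precedes_new t & (f t).+1 = new_pos.
Proof. by rewrite /new_pos => /bigmax_pos_witness [t Pt ->]; exists t. Qed.

Lemma new_pos_le : new_pos <= n.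
Proof. by apply/bigmax_leqP => i _; apply: ltn_ord. Qed.

Lemma level_le_new (i : 'I_n) : level i <= new_level.
Proof.
rewrite leqNgt; apply/negP => lt_new.
have [y /below_last_of_rel/below_last_lt_new_level] := level_prev (i := i) ltac:(lia).
lia.
Qed.

Lemma below_last_of_gap (i : 'I_n) : level i + 2 <= new_level -> below_last i.
Proof.
move=> gap; have [s Bs Es] := new_level_witness ltac:(lia).
have [y Uys Ey] := level_prev (i := s) ltac:(lia).
apply/negPn/negP => /(rel_of_not_below_last Uys Bs); rewrite U'_Pw => /Pw_lt; lia.
Qed.

Lemma below_last_of_succ (i : 'I_n) :
  new_level = (level i).+1 -> f i < new_pos -> below_last i.
Proof.
move=> Ec lt_new; have [t Pt Et] := new_pos_witness ltac:(lia).
case/orP: Pt => [/andP[Bt /eqP Elt] | /eqP Elt].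
  apply: below_last_down Bt; rewrite leqNgt; apply/negP => lt_ti.
  by have := f_level lt_ti ltac:(lia); lia.
apply: (@below_last_of_rel i t); rewrite U'_Pw Pw_succ; last by lia.
rewrite ltn_neqAle -ltnS Et lt_new andbT; apply/eqP => /val_inj E.
by move: Elt; rewrite -E; lia.
Qed.

Lemma below_last_Pw_new (i : 'I_n) :
  below_last i = (level i + 2 <= new_level) || (new_level == level i + 1) && (f i < new_pos).
Proof.
apply/idP/idP => [Bi | /orP[/below_last_of_gap // | /andP[/eqP Ec]]]; last first.
  by apply: below_last_of_succ; lia.
have := below_last_lt_new_level Bi; rewrite leq_eqVlt => /orP[/eqP Ec | gap].
  2: by apply/orP; left; lia.
apply/orP; right; rewrite precedes_new_lt ?andbT; first by rewrite -Ec addn1.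
by rewrite /precedes_new Bi -Ec eqxx.
Qed.

Lemma new_pos0 : new_pos = 0 -> new_level = 0.
Proof.
move=> pos0; apply/eqP; rewrite -leqn0 leqNgt; apply/negP => /new_level_witness [s Bs Es].
by have := @precedes_new_lt s; rewrite pos0 /precedes_new Bs -Es eqxx => /(_ isT).
Qed.

Lemma new_level_le_prev : 0 < new_pos -> new_level <= (nth 0 w new_pos.-1).+1.
Proof.
by case/new_pos_witness => t Pt <- /=; case/orP: Pt => [/andP[_ /eqP] | /eqP]; lia.
Qed.

Lemma nth_le_new_level k : k < n -> nth 0 w k <= new_level.
Proof. by move=> lt_kn; have := level_le_new (f^-1 (Ordinal lt_kn))%g; rewrite permKV. Qed.

Lemma extend_area_listing : exists W F, area_listing U W F.
Proof.
have size_w : size w = n by case: w_area.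
have le_q : new_pos <= size w by rewrite size_w new_pos_le.
pose q : 'I_n.+1 := Ordinal (new_pos_le : new_pos < n.+1).
exists (insert_nth w q new_level), (lift_perm ord_max q f); split.
- apply: area_seq_insert new_pos0 new_level_le_prev _ => //; first exact: new_pos_le.
  by move=> lt_qn; apply/leqW/nth_le_new_level.
- move=> i j; case: (unliftP ord_max i) => [i' ->|->]; case: (unliftP ord_max j) => [j' ->|->];
    rewrite ?lift_perm_id ?lift_perm_lift.
  + by rewrite Pw_insert_lift //; apply: U'_Pw.
  + by rewrite Pw_insert_lift_at // below_last_Pw_new.
  + rewrite Pw_insert_at_lift ?level_le_new //; apply/negbTE/negP => /(uio_lt U_uio).
    by rewrite lift_max /= ltnNge ltnW.
  + by rewrite Pw_irr; apply/negbTE/(uio_irr U_uio).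
- move=> i j; case: (unliftP ord_max i) => [i' ->|->]; case: (unliftP ord_max j) => [j' ->|->];
    rewrite ?lift_perm_id ?lift_perm_lift ?lift_max /=.
  + by rewrite !nth_insert_nth_bump ?ltn_bump //; apply: f_level.
  + rewrite nth_insert_nth_bump ?nth_insert_nth_at ?bump_ltn // => _ Ei.
    by apply: precedes_new_lt; rewrite /precedes_new Ei eqxx orbT.
  + by rewrite ltnNge ltnW.
  + by rewrite ltnn.
Qed.

End ExtendListing.

Lemma exists_area_listing n (U : rel 'I_n) : natural_uio U -> exists w f, area_listing U w f.
Proof.
elim: n U => [|n IH] U U_uio.
  by exists [::], 1%g; split=> [|[]|[]] //; split=> //; split=> // i; lia.
have [w [f [w_area U'_Pw f_level]]] := IH _ (natural_uio_restrict U_uio).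
exact: extend_area_listing U_uio w_area U'_Pw f_level.
Qed.

Lemma revlex_lt_first_diff (a b : seq nat) : size a = size b -> a != b ->
    (forall j, j < size a -> (forall i, i < j -> nth 0 a i = nth 0 b i) ->
       nth 0 a j != nth 0 b j -> nth 0 b j < nth 0 a j) ->
  revlex_lt a b.
Proof.
elim: a b => [|x a IH] [|y b] //= [size_ab] ne_ab first_diff.
case: (eqVneq x y) => [exy | ne_xy]; last by rewrite (first_diff 0).
subst y; rewrite ltnn /=; apply: IH => // [|j lt_ja pre].
  by rewrite eqseq_cons eqxx in ne_ab.
by apply: (first_diff j.+1) => // -[|i] //= /pre.
Qed.

Lemma sumn_ord n (s : seq nat) : size s = n -> sumn s = \sum_(i < n) nth 0 s i.
Proof. by move=> <-; rewrite sumnE (big_nth 0) big_mkord. Qed.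

Definition occurrences n (u : seq nat) (x t : nat) : {set 'I_n} :=
  [set s : 'I_n | (s < t) && (nth 0 u s == x)].

Section Occurrences.
Variables (n : nat) (u : seq nat) (x : nat).

Lemma occurrences_subset t1 t2 : t1 <= t2 ->
  occurrences n u x t1 \subset occurrences n u x t2.
Proof.
move=> le_t; apply/subsetP => s; rewrite !inE => /andP[lt_st ->].
by rewrite (leq_trans lt_st le_t).
Qed.

Lemma occurrences_proper t1 t2 (s : 'I_n) : t1 <= s < t2 -> nth 0 u s = x ->
  occurrences n u x t1 \proper occurrences n u x t2.
Proof.
move=> /andP[le_ts lt_st] us; apply/properP; split; first by apply: occurrences_subset; lia.
by exists s; rewrite !inE us eqxx ?andbT // -leqNgt.
Qed.

Lemma eq_occurrences v t : (forall i, i < t -> nth 0 u i = nth 0 v i) ->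
  occurrences n u x t = occurrences n v x t.
Proof.
by move=> pre; apply/setP => s; rewrite !inE; case: (ltnP s t) => //= /pre ->.
Qed.

End Occurrences.

Section Minimal.
Variables (n : nat) (w v : seq nat) (h : {perm 'I_n}).
Hypothesis w_area : area_seq n w.
Hypothesis size_v : size v = n.
Hypothesis h_iso : forall s t, Pw w s t = Pw v (h s) (h t).

Lemma area_listing_le (t : 'I_n) : nth 0 w t <= nth 0 v (h t).
Proof.
suff le_v k (s : 'I_n) : nth 0 w s = k -> k <= nth 0 v (h s) by apply: le_v.
elim: k s => [//|k IH] {}t wt.
have [s Pst ws] := area_seq_Pw_prev w_area (ltac:(lia) : 0 < nth 0 w t).
have := IH s ltac:(lia); rewrite h_iso in Pst; have := Pw_lt Pst; lia.
Qed.

Lemma sumn_area_listing_leqif :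
  sumn w <= sumn v ?= iff [forall t : 'I_n, nth 0 w t == nth 0 v (h t)].
Proof.
have size_w : size w = n by case: w_area.
have -> : sumn v = \sum_(t < n) nth 0 v (h t).
  by rewrite (sumn_ord size_v) (reindex_inj (@perm_inj _ h)).
rewrite (sumn_ord size_w); apply: leqif_sum => t _.
exact/leqif_eq/area_listing_le.
Qed.

Section LevelPreserving.
Hypothesis h_level : forall t : 'I_n, nth 0 w t = nth 0 v (h t).

Lemma occurrences_iso (t : 'I_n) b : nth 0 w t = b.+1 ->
  occurrences n w b t = h @^-1: occurrences n v b (h t).
Proof.
move=> wt; apply/setP => s; rewrite !inE -!h_level.
case: (eqVneq (nth 0 w s) b) => [ws | _]; last by rewrite !andbF.
have Pw_w : Pw w s t = (s < t) by apply: Pw_succ; rewrite ws wt.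
have Pw_v : Pw v (h s) (h t) = (h s < h t) by apply: Pw_succ; rewrite -!h_level ws wt.
by rewrite -Pw_w -Pw_v h_iso.
Qed.

Lemma first_diff_gt j : j < n -> (forall i, i < j -> nth 0 w i = nth 0 v i) ->
  nth 0 w j != nth 0 v j -> nth 0 v j < nth 0 w j.
Proof.
move=> lt_jn pre ne_j; rewrite ltnNge leq_eqVlt (negbTE ne_j) /=.
apply/negP => lt_wv; have [b vj] : exists b, nth 0 v j = b.+1 by exists (nth 0 v j).-1; lia.
pose p := #|occurrences n v b j|.
pose S u := [set t : 'I_n | (nth 0 u t == b.+1) && (#|occurrences n u b t| <= p)].
have S_iso : S w = h @^-1: S v.
  apply/setP => t; rewrite !inE -h_level.
  case: (eqVneq (nth 0 w t) b.+1) => [wt | _] //=.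
  by rewrite (occurrences_iso wt) card_preimset //; apply: perm_inj.
have S_w : S w \subset occurrences n w b.+1 j.
  apply/subsetP => t; rewrite !inE => /andP[/eqP wt le_p]; rewrite wt eqxx andbT.
  rewrite ltnNge; apply/negP => le_jt.
  have [s /andP[le_js le_st] ws] :=
    area_seq_climb w_area (ltn_ord t) le_jt (k := b) ltac:(lia).
  have lt_st : s < t.
    by rewrite ltn_neqAle le_st andbT; apply/eqP => est; move: ws; rewrite est wt; lia.
  have lt_sn : s < n by apply: ltn_trans (ltn_ord t).
  have := proper_card
    (@occurrences_proper n w b j t (Ordinal lt_sn) ltac:(rewrite /=; lia) ws).
  by rewrite (eq_occurrences _ _ pre) -/p; lia.
have S_v : occurrences n v b.+1 j \proper S v.
  apply/properP; split.
    apply/subsetP => t; rewrite !inE => /andP[lt_tj ->] /=.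
    exact/subset_leq_card/occurrences_subset/ltnW.
  by exists (Ordinal lt_jn); rewrite !inE ?ltnn //= vj eqxx /=.
have := proper_card S_v.
rewrite -(eq_occurrences _ _ pre) -(card_preimset (S v) (@perm_inj _ h)) -S_iso.
by have := subset_leq_card S_w; rewrite leqNgt => /negP.
Qed.

End LevelPreserving.

Lemma area_listing_min : grevlex_le w v.
Proof.
have size_w : size w = n by case: w_area.
have [le_sum eq_sum] := sumn_area_listing_leqif.
rewrite /grevlex_le /grevlex_lt; case: (ltngtP (sumn w) (sumn v)) => [_ | lt_vw | sum_eq].
- by rewrite orbT.
- by move: le_sum; rewrite leqNgt lt_vw.
have h_level (t : 'I_n) : nth 0 w t = nth 0 v (h t).
  by apply/eqP; move: t; apply/forallP; rewrite -eq_sum sum_eq.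
case: eqVneq => //= ne_wv; apply: revlex_lt_first_diff; rewrite ?size_w //.
exact: first_diff_gt.
Qed.

End Minimal.

Theorem mainTheorem11 (n : nat) (U : rel 'I_n) :
  is_unit_interval_order U ->
  (exists w, area_seq n w /\ part_listing U w) /\
  (forall w, area_seq n w -> part_listing U w ->
     forall v, part_listing U v -> grevlex_le w v).
Proof.
move=> /unit_interval_order_natural U_uio.
have [w [f [w_area U_Pw _]]] := exists_area_listing U_uio.
split; first by exists w; split=> //; split; [case: w_area | exists f].
move=> w1 w1_area [_ [f1 U_w1]] v [size_v [g U_v]].
apply: (area_listing_min (h := (f1^-1 * g)%g)) => // s t.
by rewrite !permM -U_v U_w1 !permKV.
Qed.
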